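(* Let $(G,M,\Delta)$ be a Garside structure, $(H,N,\delta)$ a parabolic substructure, and $T$ the set of $(H,N)$-reduced elements of $G$. Let $c\in T\cap M$ and $\beta\in H$, and let $\beta=b_2^{-1}b_1$ be the left orthogonal form of $\beta$. Then $b_2\wedge_L(b_1c)=1$, and therefore $b_2^{-1}(b_1c)$ is the left orthogonal form of $\beta c$.
   Context: Let $G$ be a group and $M$ a submonoid with $M\cap M^{-1}=\{1\}$. Define $\alpha\le_L\beta$ iff $\alpha^{-1}\beta\in M$, and $\alpha\le_R\beta$ iff $\beta\alpha^{-1}\in M$. For $a\in M$ let $\mathrm{Div}_L(a)=\{b\in M: b\le_L a\}$, $\mathrm{Div}_R(a)=\{b\in M: b\le_R a\}$; $a$ is balanced if these coincide, and then $\mathrm{Div}(a)$ denotes this set. $M$ is Noetherian if each $a\in M$ admits an $n$ such that $a$ is not a product of more than $n$ non-trivial factors. A Garside structure $(G,M,\Delta)$: $\Delta\in M$ balanced, $M$ Noetherian, $\mathrm{Div}(\Delta)$ finite and generating $M$ as a monoid and $G$ as a group, $(G,\le_L)$ a lattice with meet $\wedge_L$. A parabolic substructure $(H,N,\delta)$: $\delta\in M$ balanced, $H$ (resp. $N$) the subgroup (resp. submonoid) generated by $\mathrm{Div}(\delta)$, and $\mathrm{Div}(\delta)=\mathrm{Div}(\Delta)\cap N$; it is assumed $H\ne\{1\}$. Put $\omega=\delta^{-1}\Delta$. $a\in M$ is unmovable if $\Delta\not\le_L a$; every $\alpha\in G$ has a unique right $\Delta$-form $\alpha=a\Delta^p$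 ($a\in M$ unmovable, $p\in\mathbb Z$). $a\in M$ is $N$-reduced if $a\wedge_L\delta=1$. $\alpha$ with right $\Delta$-form $a\Delta^p$ is $(H,N)$-reduced if $a$ is $N$-reduced and either $p=0$, or $p<0$ and $\omega\not\le_L a$. Every $\alpha\in G$ can be written uniquely as $\alpha=b^{-1}a$ with $a,b\in M$ and $a\wedge_L b=1$; this is its left orthogonal form. *)

From Stdlib Require Import List ZArith PeanoNat.
Import ListNotations.

Record Group := {
  carrier :> Type;
  gmul : carrier -> carrier -> carrier;
  gone : carrier;
  ginv : carrier -> carrier;
  gmulA : forall x y z, gmul x (gmul y z) = gmul (gmul x y) z;
  gmul1l : forall x, gmul gone x = x;
  gmulVl : forall x, gmul (ginv x) x = gone
}.

Arguments gmul {G} : rename.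
Arguments gone {G} : rename.
Arguments ginv {G} : rename.

Section Garside.
Context {G : Group}.

Definition gprod (l : list G) : G := fold_right (@gmul G) (@gone G) l.

Definition gsprod (l : list (G * bool)) : G :=
  fold_right (fun (p : G * bool) (acc : G) => gmul (if snd p then fst p else ginv (fst p)) acc) (@gone G) l.

Fixpoint gpow (x : G) (n : nat) : G :=
  match n with O => gone | S k => gmul x (gpow x k) end.

Definition gpowZ (x : G) (p : Z) : G :=
  match p with
  | Z0 => gone
  | Zpos n => gpow x (Pos.to_nat n)
  | Zneg n => ginv (gpow x (Pos.to_nat n))
  end.

Variable M : G -> Prop.

Definition pointed_submonoid : Prop :=
  M gone /\ (forall x y, M x -> M y -> M (gmul x y)) /\
  (forall x, M x -> M (ginv x) -> x = gone).

Definition leL (a b : G) : Prop := M (gmul (ginv a) b).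
Definition leR (a b : G) : Prop := M (gmul b (ginv a)).

Definition DivL (a b : G) : Prop := M b /\ leL b a.
Definition DivR (a b : G) : Prop := M b /\ leR b a.

Definition balanced (a : G) : Prop :=
  M a /\ forall b, DivL a b <-> DivR a b.

(* Div(a) for balanced a *)
Definition Div (a b : G) : Prop := DivL a b.

Definition noetherian : Prop :=
  forall a, M a -> exists n : nat,
    forall l : list G, Forall (fun x => M x /\ x <> gone) l -> gprod l = a ->
      length l <= n.

Definition is_meetL (m a b : G) : Prop :=
  leL m a /\ leL m b /\ forall c, leL c a -> leL c b -> leL c m.
Definition is_joinL (j a b : G) : Prop :=
  leL a j /\ leL b j /\ forall c, leL a c -> leL b c -> leL j c.

Definition lattice_L : Prop :=
  forall a b, (exists m, is_meetL m a b) /\ (exists j, is_joinL j a b).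

Definition gen_monoid (S : G -> Prop) (x : G) : Prop :=
  exists l : list G, Forall S l /\ x = gprod l.
Definition gen_group (S : G -> Prop) (x : G) : Prop :=
  exists l : list (G * bool), Forall (fun p => S (fst p)) l /\ x = gsprod l.

Definition garside_structure (Delta : G) : Prop :=
  pointed_submonoid /\
  balanced Delta /\
  noetherian /\
  (exists l : list G, forall b, Div Delta b -> In b l) /\
  (forall x, M x <-> gen_monoid (Div Delta) x) /\
  (forall x, gen_group (Div Delta) x) /\
  lattice_L.

(* (H, N, delta) parabolic substructure, with H := gen_group (Div delta),
   N := gen_monoid (Div delta) *)
Definition parabolic_substructure (Delta delta : G) : Prop :=
  balanced delta /\
  (forall b, Div delta b <-> (Div Delta b /\ gen_monoid (Div delta) b)) /\
  (exists h, gen_group (Div delta) h /\ h <> gone).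

Definition unmovable (Delta a : G) : Prop := M a /\ ~ leL Delta a.

Definition right_Delta_form (Delta alpha a : G) (p : Z) : Prop :=
  unmovable Delta a /\ alpha = gmul a (gpowZ Delta p).

Definition N_reduced (delta a : G) : Prop := M a /\ is_meetL gone a delta.

(* alpha is (H,N)-reduced; omega = delta^{-1} Delta *)
Definition HN_reduced (Delta delta alpha : G) : Prop :=
  exists a p, right_Delta_form Delta alpha a p /\ N_reduced delta a /\
    (p = 0%Z \/ ((p < 0)%Z /\ ~ leL (gmul (ginv delta) Delta) a)).

Definition left_orth_form (alpha a b : G) : Prop :=
  M a /\ M b /\ alpha = gmul (ginv b) a /\ is_meetL gone a b.

End Garside.

(* Write [beta = X^-1 Y] with [X, Y] in [N].  The submonoid [N] is closed
   under left divisors taken in [M] (peel off the first simple factor: lying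
   below an element of [N], it already divides [delta]) and under left
   quotients, so both components [b1, b2] of the orthogonal form lie in [N].
   A common left divisor of [b2] and [b1 c] in [M] is then in [N], and since
   [c /\ delta = 1], an element of [N] dividing [b1 c] divides [b1]; hence it
   divides [b1 /\ b2 = 1].  An (H,N)-reduced [c] in [M] has [p = 0], because
   conjugation by [Delta] preserves [M], so that [c Delta^k] is a multiple of
   [Delta] for [k > 0]. *)

From Stdlib Require Import List ZArith Lia.
Import ListNotations.

Set Implicit Arguments.
Unset Strict Implicit.

Section GroupLemmas.
Context {G : Group}.
Implicit Types x y : G.

Lemma gmulK x y : gmul (ginv x) (gmul x y) = y.
Proof. rewrite gmulA, gmulVl, gmul1l. reflexivity. Qed.

Lemma gmulVr x : gmul x (ginv x) = gone.
Proof.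
  rewrite <- (gmulK (ginv x) (gmul x (ginv x))), (gmulK x (ginv x)).
  apply gmulVl.
Qed.

Lemma gmul1r x : gmul x gone = x.
Proof. rewrite <- (gmulVl _ x), gmulA, gmulVr. apply gmul1l. Qed.

Lemma gmulKV x y : gmul x (gmul (ginv x) y) = y.
Proof. rewrite gmulA, gmulVr, gmul1l. reflexivity. Qed.

Lemma ginv_unique x y : gmul x y = gone -> ginv x = y.
Proof. intros E. rewrite <- (gmulK x y), E, gmul1r. reflexivity. Qed.

Lemma ginvK x : ginv (ginv x) = x.
Proof. apply ginv_unique, gmulVl. Qed.

Lemma ginv1 : ginv (@gone G) = gone.
Proof. apply ginv_unique, gmul1l. Qed.

Lemma ginvM x y : ginv (gmul x y) = gmul (ginv y) (ginv x).
Proof. apply ginv_unique. rewrite <- gmulA, gmulKV, gmulVr. reflexivity. Qed.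

End GroupLemmas.

Ltac gsimpl := repeat progress rewrite <- ?gmulA, ?ginvM, ?ginvK, ?ginv1,
  ?gmul1l, ?gmul1r, ?gmulVl, ?gmulVr, ?gmulK, ?gmulKV.

Ltac gsimpl_in H := repeat progress rewrite <- ?gmulA, ?ginvM, ?ginvK, ?ginv1,
  ?gmul1l, ?gmul1r, ?gmulVl, ?gmulVr, ?gmulK, ?gmulKV in H.

Ltac M_from H := unfold leL, leR in H |- *; gsimpl_in H; gsimpl; exact H.

Section SubmonoidOrder.
Context {G : Group} {M : G -> Prop}.
Implicit Types x y z : G.

Lemma le1L x : leL M gone x <-> M x.
Proof. unfold leL; rewrite ginv1, gmul1l; tauto. Qed.

Lemma leL1 x : leL M x gone <-> M (ginv x).
Proof. unfold leL; rewrite gmul1r; tauto. Qed.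

Lemma leL_mul2l f x y : leL M (gmul f x) (gmul f y) <-> leL M x y.
Proof. unfold leL; rewrite ginvM, <- gmulA, gmulK; tauto. Qed.

Lemma leL_mulr x y : M y -> leL M x (gmul x y).
Proof. intros My; M_from My. Qed.

Lemma is_meetL_sym m x y : is_meetL M m x y -> is_meetL M m y x.
Proof. intros (mx & my & glb); repeat split; auto. Qed.

Hypothesis PS : pointed_submonoid M.

Lemma submonoid1 : M gone.
Proof. apply PS. Qed.

Lemma submonoidM x y : M x -> M y -> M (gmul x y).
Proof. apply PS. Qed.

Lemma leL_refl x : leL M x x.
Proof. unfold leL; rewrite gmulVl; exact submonoid1. Qed.

Lemma leL_trans y x z : leL M x y -> leL M y z -> leL M x z.
Proof. intros xy yz. pose proof (submonoidM xy yz) as xz. M_from xz. Qed.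

Lemma leL1_eq x : M x -> leL M x gone -> x = gone.
Proof. intros Mx x1. apply PS; [exact Mx | now apply leL1]. Qed.

Lemma M_leL x y : M x -> leL M x y -> M y.
Proof. intros Mx xy. apply le1L, (leL_trans (y := x)); [now apply le1L | exact xy]. Qed.

Hypothesis joinL_ex : forall x y, exists j, is_joinL M j x y.

(* [z \/ 1] lies in [M], so lower bounds in [M] suffice. *)
Lemma is_meetL1 x y :
  M x -> M y -> (forall z, M z -> leL M z x -> leL M z y -> leL M z gone) ->
  is_meetL M gone x y.
Proof.
  intros Mx My lb1. repeat split; try now apply le1L.
  intros z zx zy. destruct (joinL_ex z gone) as [j (zj & j1 & jmin)].
  apply (leL_trans (y := j)); [exact zj |].
  apply lb1; [now apply le1L | apply jmin; auto; now apply le1L ..].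
Qed.

End SubmonoidOrder.

Section GeneratedMonoid.
Context {G : Group} {S : G -> Prop}.

Lemma gen_monoid_ind (P : G -> Prop) :
  P gone -> (forall s x, S s -> gen_monoid S x -> P x -> P (gmul s x)) ->
  forall x, gen_monoid S x -> P x.
Proof.
  intros P1 PS x [l [Sl ->]].
  induction Sl as [|s l Ss Sl IH]; simpl; [exact P1 |].
  apply PS; [exact Ss | exists l; auto | exact IH].
Qed.

Lemma gen_monoid1 : gen_monoid S gone.
Proof. exists []; auto. Qed.

Lemma gen_monoid_cons s x : S s -> gen_monoid S x -> gen_monoid S (gmul s x).
Proof. intros Ss [l [Sl ->]]. exists (s :: l); auto. Qed.

Lemma gen_monoid_of s : S s -> gen_monoid S s.
Proof. intros Ss. rewrite <- (gmul1r s). exact (gen_monoid_cons Ss gen_monoid1). Qed.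

Lemma gen_monoid_mul x y : gen_monoid S x -> gen_monoid S y -> gen_monoid S (gmul x y).
Proof.
  intros Sx Sy. elim Sx using gen_monoid_ind; clear x Sx.
  - now rewrite gmul1l.
  - intros s x Ss _ IH. rewrite <- gmulA. now apply gen_monoid_cons.
Qed.

Lemma gen_monoid_conj g x :
  (forall s, S s -> S (gmul (ginv g) (gmul s g))) ->
  gen_monoid S x -> gen_monoid S (gmul (ginv g) (gmul x g)).
Proof.
  intros Sconj Sx. elim Sx using gen_monoid_ind; clear x Sx.
  - gsimpl. apply gen_monoid1.
  - intros s x Ss _ IH.
    replace (gmul (ginv g) (gmul (gmul s x) g))
      with (gmul (gmul (ginv g) (gmul s g)) (gmul (ginv g) (gmul x g)))
      by (gsimpl; reflexivity).
    exact (gen_monoid_mul (gen_monoid_of (Sconj s Ss)) IH).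
Qed.

Lemma gen_monoid_sub (M : G -> Prop) x :
  pointed_submonoid M -> (forall s, S s -> M s) -> gen_monoid S x -> M x.
Proof.
  intros PS SM Sx. elim Sx using gen_monoid_ind; clear x Sx.
  - exact (submonoid1 PS).
  - intros s x Ss _ IH. exact (submonoidM PS (SM s Ss) IH).
Qed.

End GeneratedMonoid.

Section BalancedDivisors.
Context {G : Group} {M : G -> Prop} {a : G}.
Hypothesis Ba : balanced M a.

Lemma Div_lcompl s : Div M a s -> Div M a (gmul (ginv s) a).
Proof. intros [Ms sa]. apply (proj2 Ba). split; [exact sa |]. M_from Ms. Qed.

Lemma Div_rcompl s : Div M a s -> Div M a (gmul a (ginv s)).
Proof.
  intros Ds. destruct (proj1 (proj2 Ba s) Ds) as [Ms sa]. unfold leR in sa.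
  split; [exact sa |]. M_from Ms.
Qed.

Lemma Div_conj s : Div M a s -> Div M a (gmul (ginv a) (gmul s a)).
Proof. intros Ds. pose proof (Div_lcompl (Div_lcompl Ds)) as D. gsimpl_in D. exact D. Qed.

Lemma Div_conjV s : Div M a s -> Div M a (gmul a (gmul s (ginv a))).
Proof. intros Ds. pose proof (Div_rcompl (Div_rcompl Ds)) as D. gsimpl_in D. exact D. Qed.

Hypothesis PS : pointed_submonoid M.

Lemma Div1 : Div M a gone.
Proof. split; [exact (submonoid1 PS) | apply le1L, (proj1 Ba)]. Qed.

Lemma Div_self : Div M a a.
Proof. split; [exact (proj1 Ba) | exact (leL_refl PS a)]. Qed.

Lemma Div_lquot s j : Div M a s -> leL M s j -> leL M j a -> Div M a (gmul (ginv s) j).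
Proof.
  intros Ds sj ja. split; [exact sj |].
  apply (leL_trans PS (y := gmul (ginv s) a)).
  - now apply leL_mul2l.
  - apply Div_lcompl, Ds.
Qed.

Hypothesis joinL_ex : forall x y, exists j, is_joinL M j x y.

(* The factor [t u] is the join of [s] and [t]. *)
Lemma Div_join_factor s t y :
  Div M a s -> Div M a t -> M y -> leL M s (gmul t y) ->
  exists u, Div M a u /\ Div M a (gmul t u) /\ leL M s (gmul t u) /\ leL M u y.
Proof.
  intros [Ms sa] [Mt ta] My sty. destruct (joinL_ex s t) as [j (sj & tj & jmin)].
  assert (Dj : Div M a j) by (split; [exact (M_leL PS Mt tj) | now apply jmin]).
  assert (jty : leL M j (gmul t y)) by (apply jmin; [exact sty | now apply leL_mulr]).
  exists (gmul (ginv t) j). rewrite gmulKV.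
  split; [| split; [exact Dj | split; [exact sj | M_from jty]]].
  apply Div_lquot; [split; assumption | exact tj | apply Dj].
Qed.

End BalancedDivisors.

Section Parabolic.
Context {G : Group} {M : G -> Prop} {Delta delta : G}.
Hypotheses (PS : pointed_submonoid M) (Bd : balanced M delta)
  (joinL_ex : forall x y, exists j, is_joinL M j x y).

Local Notation N := (gen_monoid (Div M delta)).

Lemma N_M x : N x -> M x.
Proof. apply (gen_monoid_sub PS). now intros s []. Qed.

Lemma N_lquot_Div x h : N x -> Div M delta h -> leL M h x -> N (gmul (ginv h) x).
Proof.
  intros Nx. revert h. elim Nx using gen_monoid_ind; clear x Nx.
  - intros h Dh h1. rewrite (leL1_eq PS (proj1 Dh) h1). gsimpl. apply gen_monoid1.
  - intros t x Dt Nx IH h Dh htx.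
    destruct (Div_join_factor Bd PS joinL_ex Dh Dt (N_M Nx) htx)
      as (u & Du & Dtu & htu & ux).
    replace (gmul (ginv h) (gmul t x))
      with (gmul (gmul (ginv h) (gmul t u)) (gmul (ginv u) x)) by (gsimpl; reflexivity).
    apply gen_monoid_cons; [| exact (IH u Du ux)].
    exact (Div_lquot Bd PS Dh htu (proj2 Dtu)).
Qed.

Lemma N_lquot h x : N h -> N x -> leL M h x -> N (gmul (ginv h) x).
Proof.
  intros Nh. revert x. elim Nh using gen_monoid_ind; clear h Nh.
  - intros x Nx _. gsimpl. exact Nx.
  - intros s h Ds Nh IH x Nx shx.
    pose proof (leL_trans PS (leL_mulr s (N_M Nh)) shx) as sx.
    rewrite ginvM, <- gmulA. apply IH; [exact (N_lquot_Div Nx Ds sx) | M_from shx].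
Qed.

Section Reduced.
Variable c : G.
Hypothesis Nc : N_reduced M delta c.

Lemma N_reduced_leL_Div m s : N m -> Div M delta s -> leL M s (gmul m c) -> leL M s m.
Proof.
  intros Nm. revert s. elim Nm using gen_monoid_ind; clear m Nm.
  - intros s Ds sc. rewrite gmul1l in sc. apply Nc; [exact sc | apply Ds].
  - intros t m Dt Nm IH s Ds stmc. rewrite <- gmulA in stmc.
    pose proof (submonoidM PS (N_M Nm) (proj1 Nc)) as Mmc.
    destruct (Div_join_factor Bd PS joinL_ex Ds Dt Mmc stmc) as (u & Du & _ & stu & umc).
    apply (leL_trans PS stu), leL_mul2l. exact (IH u Du umc).
Qed.

Lemma N_reduced_leL y m : N y -> N m -> leL M y (gmul m c) -> leL M y m.
Proof.
  intros Ny. revert m. elim Ny using gen_monoid_ind; clear y Ny.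
  - intros m Nm _. apply le1L, N_M, Nm.
  - intros s y Ds Ny IH m Nm symc.
    pose proof (leL_trans PS (leL_mulr s (N_M Ny)) symc) as smc.
    pose proof (N_lquot_Div Nm Ds (N_reduced_leL_Div Nm Ds smc)) as Nsm.
    assert (ysmc : leL M y (gmul (gmul (ginv s) m) c)) by M_from symc.
    pose proof (IH _ Nsm ysmc) as ysm. M_from ysm.
Qed.

End Reduced.

Lemma gen_group_Div_lquot beta :
  gen_group (Div M delta) beta -> exists X Y, N X /\ N Y /\ beta = gmul (ginv X) Y.
Proof.
  intros [l [Dl ->]].
  induction Dl as [|[s b] l Ds Dl (X & Y & NX & NY & EXY)]; simpl in *;
    [| rewrite EXY; destruct b].
  - exists gone, gone. repeat split; try apply gen_monoid1. gsimpl. reflexivity.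
  - (* [s = w^-1 delta] with [w = delta s^-1], and
       [delta X^-1 = (delta X delta^-1)^-1 delta]. *)
    set (w := gmul delta (ginv s)).
    set (X' := gmul (ginv (ginv delta)) (gmul X (ginv delta))).
    exists (gmul X' w), (gmul delta Y). repeat split.
    + apply gen_monoid_mul.
      * apply gen_monoid_conj; [| exact NX].
        intros u Du. rewrite ginvK. exact (Div_conjV Bd Du).
      * exact (gen_monoid_of (Div_rcompl Bd Ds)).
    + exact (gen_monoid_cons (Div_self Bd PS) NY).
    + unfold X', w. gsimpl. reflexivity.
  - exists (gmul X s), Y. repeat split; [| exact NY | gsimpl; reflexivity].
    exact (gen_monoid_mul NX (gen_monoid_of Ds)).
Qed.

Hypotheses (BD : balanced M Delta)
  (M_gen : forall x, M x -> gen_monoid (Div M Delta) x)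
  (Div_delta : forall s, Div M delta s <-> Div M Delta s /\ N s).

Lemma Div_Delta_leL_N s x : Div M Delta s -> N x -> leL M s x -> Div M delta s.
Proof.
  intros Ds Nx. revert s Ds. elim Nx using gen_monoid_ind; clear x Nx.
  - intros s Ds s1. rewrite (leL1_eq PS (proj1 Ds) s1). exact (Div1 Bd PS).
  - intros t x Dt Nx IH s Ds stx.
    pose proof (proj1 (proj1 (Div_delta t) Dt)) as DtD.
    destruct (Div_join_factor BD PS joinL_ex Ds DtD (N_M Nx) stx)
      as (u & DuD & DtuD & stu & ux).
    assert (Dtu : Div M delta (gmul t u)).
    { apply Div_delta. split; [exact DtuD |].
      exact (gen_monoid_cons Dt (gen_monoid_of (IH u DuD ux))). }
    split; [apply Ds | exact (leL_trans PS stu (proj2 Dtu))].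
Qed.

Lemma N_leL_closed y x : M y -> N x -> leL M y x -> N y.
Proof.
  intros My. revert x. elim (M_gen My) using gen_monoid_ind; clear y My.
  - intros. apply gen_monoid1.
  - intros s y Ds Gy IH x Nx syx.
    pose proof (gen_monoid_sub PS (fun s Ds => proj1 Ds) Gy) as My.
    pose proof (leL_trans PS (leL_mulr s My) syx) as sx.
    pose proof (Div_Delta_leL_N Ds Nx sx) as Ds'.
    apply (gen_monoid_cons Ds'), (IH (gmul (ginv s) x)).
    + exact (N_lquot_Div Nx Ds' sx).
    + M_from syx.
Qed.

Lemma left_orth_form_N beta b1 b2 :
  gen_group (Div M delta) beta -> left_orth_form M beta b1 b2 -> N b1 /\ N b2.
Proof.
  intros Hbeta (Mb1 & Mb2 & Eb & _ & _ & orth).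
  destruct (gen_group_Div_lquot Hbeta) as (X & Y & NX & NY & EXY).
  assert (EY : Y = gmul X (gmul (ginv b2) b1))
    by (rewrite <- Eb, EXY; gsimpl; reflexivity).
  (* [b2 X^-1] is a common lower bound of [b1] and [b2], so [z = X b2^-1] is in [M]. *)
  set (z := gmul X (ginv b2)).
  assert (Mz : M z).
  { assert (lb : leL M (gmul b2 (ginv X)) gone).
    { apply orth; unfold leL.
      - rewrite EY in NY. apply N_M in NY. M_from NY.
      - apply N_M in NX. M_from NX. }
    apply leL1 in lb. M_from lb. }
  assert (Nz : N z) by (apply (N_leL_closed Mz NX); unfold z; M_from Mb2).
  split.
  - replace b1 with (gmul (ginv z) Y) by (unfold z; rewrite EY; gsimpl; reflexivity).
    apply (N_lquot Nz NY). unfold z; rewrite EY. M_from Mb1.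
  - replace b2 with (gmul (ginv z) X) by (unfold z; gsimpl; reflexivity).
    apply (N_lquot Nz NX). unfold z. M_from Mb2.
Qed.

Lemma orth_mulr_N_reduced b1 b2 c :
  N b1 -> N b2 -> is_meetL M gone b1 b2 -> N_reduced M delta c ->
  is_meetL M gone b2 (gmul b1 c).
Proof.
  intros Nb1 Nb2 (_ & _ & orth) Nc.
  apply (is_meetL1 PS joinL_ex (N_M Nb2) (submonoidM PS (N_M Nb1) (proj1 Nc))).
  intros y My yb2 yb1c.
  pose proof (N_leL_closed My Nb2 yb2) as Ny.
  exact (orth y (N_reduced_leL Nc Ny Nb1 yb1c) yb2).
Qed.

End Parabolic.

Section DeltaConjugation.
Context {G : Group} {M : G -> Prop} {Delta : G}.
Hypotheses (PS : pointed_submonoid M) (BD : balanced M Delta)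
  (M_gen : forall x, M x -> gen_monoid (Div M Delta) x).

Lemma M_conj_Delta x : M x -> M (gmul (ginv Delta) (gmul x Delta)).
Proof.
  intros Mx. apply (gen_monoid_sub PS (S := Div M Delta)); [now intros s [] |].
  apply gen_monoid_conj; [exact (fun s Ds => Div_conj BD Ds) | exact (M_gen Mx)].
Qed.

Lemma gpow_M n : M (gpow Delta n).
Proof.
  induction n as [|n IH]; simpl; [exact (submonoid1 PS) | exact (submonoidM PS (proj1 BD) IH)].
Qed.

Lemma HN_reduced_N_reduced delta c :
  HN_reduced M Delta delta c -> M c -> N_reduced M delta c.
Proof.
  intros (a & p & ((Ma & unmov) & Ec) & Na & [-> | [Hp _]]) Mc.
  - simpl in Ec. rewrite gmul1r in Ec. subst c. exact Na.
  - destruct p as [| |k]; try lia. exfalso. apply unmov.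
    destruct (Pos.to_nat k) as [|n] eqn:Ek; [lia |].
    assert (Ea : a = gmul c (gmul Delta (gpow Delta n)))
      by (simpl in Ec; rewrite Ek in Ec; rewrite Ec; gsimpl; reflexivity).
    pose proof (submonoidM PS (M_conj_Delta Mc) (gpow_M n)) as Ma'.
    rewrite Ea. M_from Ma'.
Qed.

End DeltaConjugation.

Theorem lemma3p8 (G : Group) (M : G -> Prop) (Delta delta : G)
  (HG : garside_structure M Delta)
  (HP : parabolic_substructure M Delta delta)
  (c beta b1 b2 : G)
  (Hc : HN_reduced M Delta delta c) (HcM : M c)
  (Hbeta : gen_group (Div M delta) beta)
  (Hform : left_orth_form M beta b1 b2) :
  is_meetL M gone b2 (gmul b1 c) /\
  left_orth_form M (gmul beta c) (gmul b1 c) b2.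
Proof.
  destruct HG as (PS & BD & _ & _ & Mgen & _ & Lat).
  destruct HP as (Bd & Par & _).
  assert (joinL_ex : forall x y, exists j, is_joinL M j x y) by apply Lat.
  assert (M_gen : forall x, M x -> gen_monoid (Div M Delta) x) by apply Mgen.
  pose proof (HN_reduced_N_reduced PS BD M_gen Hc HcM) as Nc.
  destruct (left_orth_form_N PS Bd joinL_ex BD M_gen Par Hbeta Hform) as [Nb1 Nb2].
  destruct Hform as (Mb1 & Mb2 & Eb & orth).
  pose proof (orth_mulr_N_reduced PS Bd joinL_ex BD M_gen Par Nb1 Nb2 orth Nc) as orth'.
  split; [exact orth' |].
  split; [exact (submonoidM PS Mb1 HcM) |].
  split; [exact Mb2 |].
  split; [rewrite Eb; gsimpl; reflexivity | exact (is_meetL_sym orth')].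
Qed.
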